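(* Let $n\ge2$ and $h\in(0,1]$. (a) If $\epsilon\in[0,1]$ and $(\bar\omega_k)_{k=0}^{2n}$ satisfies $\bar\omega_k\in C(k,0,0)$, $\bar\omega_{n+k}\in C(n,k,k)$ for $k=0,\dots,n$, then $\max_kH(\bar\omega_k)$ equals $H(\bar\omega_{n/2})=n-\frac{n^2}2+hn$ if $n$ is even; $H(\bar\omega_{(n+1)/2})=n-\frac{n^2+1}2+\epsilon+h(n-1)$ if $n$ is odd and $h\le\epsilon$; $H(\bar\omega_{(n-1)/2})=n-\frac{n^2+1}2-\epsilon+h(n+1)$ if $n$ is odd and $\epsilon<h$. (b) If $0<h<-\epsilon\le1$ and $(\check\omega_k)_{k=0}^{2n}$ satisfies $\check\omega_k\in C(n-k,0,0)$, $\check\omega_{n+k}\in C(0,k,0)$ for $k=0,\dots,n$, then $\max_kH(\check\omega_k)$ equals $H(\check\omega_{n/2})=H(\check\omega_{n+n/2})=n-\frac{n^2}2+hn$ if $n$ is even and $h-\epsilon<1$; $H(\check\omega_{(n+2)/2})=H(\check\omega_{n+(n-2)/2})=n-\frac{n^2}2-2(\epsilon+1)+h(n+2)$ if $n$ is even and $1\le h-\epsilon<2$; $H(\check\omega_{(n+1)/2})=H(\check\omega_{n+(n-1)/2})=n-\frac{n^2+1}2-\epsilon+h(n+1)$ if $n$ is odd. (c) If $0<-\epsilon<h\le1$ and $(\tilde\omega_k)_{k=0}^{n}$ satisfies $\tilde\omega_k\in C(n,k,k)$ for $k=0,\dots,n$, then $\max_kH(\tilde\omega_k)$ equals $H(\tilde\omega_{n/2})=n-\frac{n^2}2-hn$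 if $n$ is even, and $H(\tilde\omega_{(n-1)/2})=n-\frac{n^2+1}2+\epsilon-h(n-1)$ if $n$ is odd.
   Context: The graph $\mathcal G(2,n)$ has vertex set $V=V^{(1)}\cup V^{(2)}$ with $V^{(1)}=\{1,\dots,n\}$, $V^{(2)}=\{n+1,\dots,2n\}$; its edge set is $E=E_{\mathrm{int}}\cup E_{\mathrm{cross}}$, where $E_{\mathrm{int}}$ consists of all pairs of distinct vertices in the same $V^{(k)}$ and $E_{\mathrm{cross}}=\{\{i,i+n\}:1\le i\le n\}$. For $\sigma\in\{-1,+1\}^V$, $H(\sigma)=-\sum_{\{i,j\}\in E_{\mathrm{int}}}\sigma_i\sigma_j-\epsilon\sum_{\{i,j\}\in E_{\mathrm{cross}}}\sigma_i\sigma_j-h\sum_{i\in V}\sigma_i$, with $\epsilon\in[-1,1]$. $C(p_1,p_2,a)$ is the set of configurations with exactly $p_1$ vertices of spin $+1$ in $V^{(1)}$, exactly $p_2$ vertices of spin $+1$ in $V^{(2)}$, and exactly $a$ cross-edges both of whose endpoints have spin $+1$ ($H$ is constant on each such set). *)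

From mathcomp Require Import all_boot all_order all_algebra.
Set Implicit Arguments. Unset Strict Implicit. Unset Printing Implicit Defensive.
Import Order.TTheory GRing.Theory Num.Theory.
Local Open Scope ring_scope.

(* Vertices of G(2,n): 'I_(2*n), 0-based.  V^(1) = {i | i < n},
   V^(2) = {i | n <= i}.  Cross edges: {i, i+n} for i < n. *)
Definition config (n : nat) := {ffun 'I_(2 * n) -> bool}.

Definition spin (R : ringType) (b : bool) : R := if b then 1 else -1.

Definition same_block (n : nat) (i j : 'I_(2 * n)) : bool :=
  ((i < n) == (j < n))%N.

Definition int_edge (n : nat) (i j : 'I_(2 * n)) : bool :=
  (i < j)%N && same_block i j.

Definition cross_edge (n : nat) (i j : 'I_(2 * n)) : bool :=
  (i < n)%N && (nat_of_ord j == i + n)%N.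

Definition Ham (R : ringType) (n : nat) (eps h : R) (s : config n) : R :=
  - (\sum_(i : 'I_(2 * n)) \sum_(j : 'I_(2 * n) | int_edge i j)
        spin R (s i) * spin R (s j))
  - eps * (\sum_(i : 'I_(2 * n)) \sum_(j : 'I_(2 * n) | cross_edge i j)
        spin R (s i) * spin R (s j))
  - h * (\sum_(i : 'I_(2 * n)) spin R (s i)).

Definition Cset (n p1 p2 a : nat) : {set config n} :=
  [set s : config n |
    [&& #|[set i : 'I_(2 * n) | (i < n)%N && s i]| == p1,
        #|[set i : 'I_(2 * n) | (n <= i)%N && s i]| == p2 &
        #|[set e : 'I_(2 * n) * 'I_(2 * n) |
            [&& cross_edge e.1 e.2, s e.1 & s e.2]]| == a]].

Definition maxH (R : realDomainType) (n : nat) (eps h : R)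
    (omega : nat -> config n) (N : nat) : R :=
  \big[Num.max/Ham eps h (omega 0%N)]_(k < N.+1) Ham eps h (omega k).

From mathcomp Require Import all_boot all_order all_algebra.
From mathcomp Require Import zify ring lra.
Set Implicit Arguments. Unset Strict Implicit. Unset Printing Implicit Defensive.
Import Order.TTheory GRing.Theory Num.Theory.
Local Open Scope ring_scope.

(* Writing
      block magnetizations and cross-edge products in terms of the counts
      p1, p2, a shows that H is constant on C(p1, p2, a), equal to an explicit
      polynomial class_energy (lemma Ham_class).
   2. Along each family the energy of the k-th class is, up to a constant, the
      discrete parabola k |-> c x - x^2 / 2 with x = 2k - n, for a slope c
      depending on eps and h.  For integer k its maximum sits at the vertex
      n / 2 or at one of the two neighbouring integers, according to the
      parity of n and the range of c (the parabola lemmas).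
   3. In parts (a) and (b) the second half of the family, index n + k, is
      dominated by (resp. equal to) the mirror index n - k, so the maximum
      over 0..2n is decided on 0..n (lemma maxH_fold). *)

Section Partner.
Variable n : nat.

Lemma partner_subproof (i : 'I_(2 * n)) : ((i + n) %% (2 * n) < 2 * n)%N.
Proof. by apply: ltn_pmod; apply: leq_ltn_trans (ltn_ord i). Qed.

Definition partner (i : 'I_(2 * n)) : 'I_(2 * n) := Ordinal (partner_subproof i).

Lemma partner_lo (i : 'I_(2 * n)) : (i < n)%N -> partner i = (i + n)%N :> nat.
Proof. by move=> lt_in; rewrite /= modn_small //; lia. Qed.

Lemma partner_hi (i : 'I_(2 * n)) : (n <= i)%N -> partner i = (i - n)%N :> nat.
Proof.
move=> le_ni; have lt_i := ltn_ord i.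
by rewrite /= (_ : i + n = i - n + 2 * n)%N ?modnDr ?modn_small //; lia.
Qed.

Lemma partnerK : involutive partner.
Proof.
move=> i; apply: ord_inj; have lt_i := ltn_ord i.
case: (ltnP i n) => [lt_in | le_ni].
  have Ei := partner_lo lt_in.
  by rewrite [LHS]partner_hi Ei //; lia.
have Ei := partner_hi le_ni.
by rewrite [LHS]partner_lo Ei //; lia.
Qed.

Lemma partner_ltn (i : 'I_(2 * n)) : (partner i < n)%N = ~~ (i < n)%N.
Proof.
have lt_i := ltn_ord i.
by case: (ltnP i n) => [lt_in | le_ni]; [rewrite partner_lo | rewrite partner_hi]; lia.
Qed.

Lemma cross_edge_sum (R : nmodType) (F : 'I_(2 * n) -> 'I_(2 * n) -> R) :
  \sum_i \sum_(j | cross_edge i j) F i j = \sum_(i : 'I_(2 * n) | (i < n)%N) F i (partner i).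
Proof.
rewrite [RHS]big_mkcond; apply: eq_bigr => i _; case: ifP => lt_in.
  rewrite (big_pred1 (partner i)) // => j /=.
  by rewrite /cross_edge lt_in -val_eqE /= modn_small //; lia.
by rewrite big_pred0 // => j; rewrite /cross_edge lt_in.
Qed.

End Partner.

Section Spin.
Variable R : comRingType.
Local Notation ind b := ((b : nat)%:R : R).

Lemma spin_sqr (b : bool) : spin R b * spin R b = 1.
Proof. by case: b; rewrite /= ?mulrNN mulr1. Qed.

Lemma spin_ind (b : bool) : spin R b = 2 * ind b - 1.
Proof. by case: b => /=; ring. Qed.

Lemma spin_mul (b c : bool) :
  spin R b * spin R c = 4 * ind (b && c) - 2 * ind b - 2 * ind c + 1.
Proof. by case: b; case: c => /=; ring. Qed.

Lemma sum_ind (T : finType) (P : pred T) (f : T -> bool) :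
  \sum_(i | P i) ind (f i) = #|[set i | P i && f i]|%:R.
Proof.
rewrite -sum1_card natr_sum big_mkcond [RHS]big_mkcond /=.
by apply: eq_bigr => i _; rewrite inE; case: (P i); case: (f i).
Qed.

Lemma sum_spin (T : finType) (P : pred T) (f : T -> bool) :
  \sum_(i | P i) spin R (f i) = 2 * #|[set i | P i && f i]|%:R - #|P|%:R.
Proof.
under eq_bigr => i _ do rewrite spin_ind.
by rewrite sumrB -mulr_sumr sum_ind sumr_const.
Qed.

End Spin.

Definition class_energy (R : unitRingType) (n p1 p2 a : nat) (eps h : R) : R :=
  - (((2 * p1%:R - n%:R) ^+ 2 + (2 * p2%:R - n%:R) ^+ 2 - 2 * n%:R) / 2)
  - eps * (4 * a%:R - 2 * p1%:R - 2 * p2%:R + n%:R)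
  - h * (2 * p1%:R + 2 * p2%:R - 2 * n%:R).

Section Energy.
Variable n : nat.
Local Notation lower := (fun i : 'I_(2 * n) => (i < n)%N).
Local Notation upper := (fun i : 'I_(2 * n) => ~~ (i < n)%N).

Lemma card_lower : #|[pred i | lower i]| = n.
Proof.
have le_n2n : (n <= 2 * n)%N by lia.
by rewrite -sum1_card (big_ord_narrow le_n2n) sum1_card card_ord.
Qed.

Lemma card_upper : #|[pred i | upper i]| = n.
Proof.
have := cardC [pred i | lower i]; rewrite card_lower card_ord.
have -> : #|[predC [pred i | lower i]]| = #|[pred i | upper i]| by apply: eq_card.
lia.
Qed.

Lemma int_edge_sum (R : zmodType) (F : 'I_(2 * n) -> 'I_(2 * n) -> R) :
  (forall i j, F i j = F j i) ->
  \sum_i \sum_(j | same_block i j) F i j =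
  \sum_i F i i + (\sum_i \sum_(j | int_edge i j) F i j) *+ 2.
Proof.
move=> Fsym.
have split_row i : \sum_(j | same_block i j) F i j =
    F i i + \sum_(j | int_edge i j) F i j + \sum_(j | int_edge j i) F i j.
  rewrite (bigID (fun j : 'I_(2 * n) => (i < j)%N)) /=.
  rewrite [X in _ + X](bigID (fun j : 'I_(2 * n) => (j < i)%N)) /=.
  rewrite addrCA addrC [X in X + _]addrC; congr (_ + _ + _).
  - rewrite (big_pred1 i) // => j /=; rewrite /same_block -val_eqE /=.
    by case: (ltngtP i j) => [||->]; rewrite ?andbF ?eqxx.
  - by apply: eq_bigl => j; rewrite /int_edge andbC.
  - apply: eq_bigl => j; rewrite /int_edge /same_block eq_sym.
    by case: (ltngtP i j); rewrite ?andbF ?andbT.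
have transpose : \sum_i \sum_(j | int_edge j i) F i j = \sum_i \sum_(j | int_edge i j) F i j.
  rewrite (exchange_big_dep xpredT) //=.
  by apply: eq_bigr => i _; apply: eq_bigr => j _; apply: Fsym.
under eq_bigr => i _ do rewrite split_row.
by rewrite !big_split /= transpose mulr2n addrA.
Qed.

Lemma same_block_sum (R : comRingType) (f : 'I_(2 * n) -> R) :
  \sum_i \sum_(j | same_block i j) f i * f j =
  (\sum_(i | lower i) f i) ^+ 2 + (\sum_(i | upper i) f i) ^+ 2.
Proof.
rewrite (bigID lower) /= !expr2 !mulr_suml.
congr (_ + _); apply: eq_bigr => i side_i; rewrite -mulr_sumr;
  congr (_ * _); apply: eq_bigl => j; rewrite /same_block.
  by rewrite side_i; case: (j < n)%N.
by rewrite (negbTE side_i); case: (j < n)%N.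
Qed.

Variable s : config n.

Lemma card_plus_cross (R : comRingType) :
  #|[set e : 'I_(2 * n) * 'I_(2 * n) | [&& cross_edge e.1 e.2, s e.1 & s e.2]]|%:R
  = \sum_(i | lower i) ((s i && s (partner i) : nat)%:R : R).
Proof.
rewrite -(sum_ind _ (fun e : 'I_(2 * n) * 'I_(2 * n) => cross_edge e.1 e.2)).
rewrite -(cross_edge_sum (fun i j => ((s i && s j : nat)%:R : R))).
rewrite (pair_big_dep xpredT (fun i j => cross_edge i j)) /=.
by apply: eq_bigl => e.
Qed.

Lemma partner_sum (R : nmodType) (f : 'I_(2 * n) -> R) :
  \sum_(i | lower i) f (partner i) = \sum_(i | upper i) f i.
Proof.
rewrite [RHS](reindex_inj (inv_inj (@partnerK n))) /=.
by apply: eq_bigl => i; rewrite partner_ltn negbK.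
Qed.

End Energy.

Lemma Ham_class (R : numFieldType) n (s : config n) p1 p2 a (eps h : R) :
  s \in Cset n p1 p2 a -> Ham eps h s = class_energy n p1 p2 a eps h.
Proof.
rewrite inE => /and3P [/eqP card1 /eqP card2 /eqP card_a].
pose sg (i : 'I_(2 * n)) := spin R (s i).
pose ind (i : 'I_(2 * n)) := ((s i : nat)%:R : R).
have plus_lower : \sum_(i : 'I_(2 * n) | (i < n)%N) ind i = p1%:R by rewrite sum_ind card1.
have plus_upper : \sum_(i : 'I_(2 * n) | ~~ (i < n)%N) ind i = p2%:R.
  by rewrite sum_ind -card2; congr _%:R; apply: eq_card => i; rewrite !inE -leqNgt.
have mag1 : \sum_(i : 'I_(2 * n) | (i < n)%N) sg i = 2 * p1%:R - n%:R.
  by rewrite sum_spin -sum_ind plus_lower card_lower.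
have mag2 : \sum_(i : 'I_(2 * n) | ~~ (i < n)%N) sg i = 2 * p2%:R - n%:R.
  by rewrite sum_spin -sum_ind plus_upper card_upper.
have intra : (\sum_i \sum_(j | int_edge i j) sg i * sg j) *+ 2
    = (2 * p1%:R - n%:R) ^+ 2 + (2 * p2%:R - n%:R) ^+ 2 - 2 * n%:R.
  have := int_edge_sum (F := fun i j => sg i * sg j) (fun i j => mulrC _ _).
  rewrite same_block_sum mag1 mag2 => ->.
  have -> : \sum_i sg i * sg i = \sum_(i : 'I_(2 * n)) 1.
    by apply: eq_bigr => i _; apply: spin_sqr.
  by rewrite sumr_const card_ord natrM; ring.
have cross : \sum_i \sum_(j | cross_edge i j) sg i * sg j
    = 4 * a%:R - 2 * p1%:R - 2 * p2%:R + n%:R.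
  rewrite cross_edge_sum; under eq_bigr do rewrite spin_mul.
  rewrite !big_split !sumrN /= -!mulr_sumr -card_plus_cross card_a.
  rewrite plus_lower (partner_sum (fun i => ind i)) plus_upper.
  by rewrite sumr_const card_lower.
rewrite /sg in mag1 mag2 intra cross.
rewrite /Ham /class_energy [X in h * X](bigID (fun i : 'I_(2 * n) => (i < n)%N)) /= mag1 mag2.
rewrite cross -intra -mulr_natr.
by field.
Qed.

Lemma maxH_argmax (R : realDomainType) n (eps h : R) (omega : nat -> config n) N j :
  (j <= N)%N ->
  (forall k, (k <= N)%N -> Ham eps h (omega k) <= Ham eps h (omega j)) ->
  maxH eps h omega N = Ham eps h (omega j).
Proof.
move=> le_jN j_max; apply/eqP; rewrite eq_le; apply/andP; split.
  by apply: bigmax_le => [|k _]; apply: j_max; rewrite // -ltnS.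
have := le_bigmax (Ham eps h (omega 0)) (fun k : 'I_N.+1 => Ham eps h (omega k)) (inord j).
by rewrite inordK.
Qed.

Lemma maxH_fold (R : realDomainType) n (eps h : R) (omega : nat -> config n) j :
  (j <= n)%N ->
  (forall k, (k <= n)%N -> Ham eps h (omega (n + k)%N) <= Ham eps h (omega (n - k)%N)) ->
  (forall k, (k <= n)%N -> Ham eps h (omega k) <= Ham eps h (omega j)) ->
  maxH eps h omega (2 * n) = Ham eps h (omega j).
Proof.
move=> le_jn mirror j_max; apply: maxH_argmax => [|k le_k2n]; first lia.
case: (leqP k n) => [|lt_nk]; first exact: j_max.
rewrite (_ : k = n + (k - n))%N; last lia.
by apply: le_trans (mirror _ _) (j_max _ _); lia.
Qed.

(* The discrete parabola k |-> c x - x^2 / 2 in the deviation x = 2k - n;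
   all the energy profiles of the lemma are affine images of it. *)
Definition parabola (R : numFieldType) (n : nat) (c : R) (k : nat) : R :=
  c * (2 * k%:R - n%:R) - (2 * k%:R - n%:R) ^+ 2 / 2.

Section Parabola.
Variable R : realFieldType.

Lemma nat_gap (k q : nat) : 0 <= (k%:R - q%:R) * (k%:R - q%:R - 1) :> R.
Proof.
case: (leqP k q) => [le_kq | lt_qk].
  have : k%:R <= q%:R :> R by rewrite ler_nat.
  nra.
have : q%:R + 1 <= k%:R :> R by rewrite natr1 ler_nat.
nra.
Qed.

(* The deviation d = k - q is an integer: it avoids the open intervals
   (-1, 0), (0, 1) and (1, 2), which is all the parabola bounds below use. *)
Variables (q k : nat) (c : R).
Let d : R := k%:R - q%:R.
Let gap0 : 0 <= d * (d - 1) := nat_gap k q.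
Let gap_up : 0 <= (d + 1) * d.
Proof. by have := nat_gap k.+1 q; rewrite -[k.+1%:R]natr1 /d; nra. Qed.
Let gap_down : 0 <= (d - 1) * (d - 2).
Proof. by have := nat_gap k q.+1; rewrite -[q.+1%:R]natr1 /d; nra. Qed.

Lemma parabola_even : -1 <= c -> c <= 1 ->
  parabola (2 * q) c k <= parabola (2 * q) c q.
Proof.
move=> c_ge c_le.
have : 0 <= (1 - c) * ((d + 1) * d) by apply: mulr_ge0 => //; lra.
have : 0 <= (1 + c) * (d * (d - 1)) by apply: mulr_ge0 => //; lra.
rewrite /parabola /d natrM; nra.
Qed.

Lemma parabola_even_shift : 1 <= c -> c <= 2 ->
  parabola (2 * q) c k <= parabola (2 * q) c q.+1.
Proof.
move=> c_ge c_le.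
have : 0 <= (2 - c) * (d * (d - 1)) by apply: mulr_ge0 => //; lra.
have : 0 <= (c - 1) * ((d - 1) * (d - 1)) by apply: mulr_ge0; [lra | rewrite -expr2 sqr_ge0].
rewrite /parabola /d natrM -[q.+1%:R]natr1; nra.
Qed.

Lemma parabola_odd_up : 0 <= c -> c <= 2 ->
  parabola (2 * q + 1) c k <= parabola (2 * q + 1) c q.+1.
Proof.
move=> c_ge c_le.
have : 0 <= c * ((d - 1) * (d - 2)) by apply: mulr_ge0.
have : 0 <= (2 - c) * (d * (d - 1)) by apply: mulr_ge0 => //; lra.
rewrite /parabola /d natrD natrM -[q.+1%:R]natr1; nra.
Qed.

Lemma parabola_odd_down : -2 <= c -> c <= 0 ->
  parabola (2 * q + 1) c k <= parabola (2 * q + 1) c q.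
Proof.
move=> c_ge c_le.
have : 0 <= - c * ((d + 1) * d) by apply: mulr_ge0 => //; lra.
have : 0 <= (2 + c) * (d * (d - 1)) by apply: mulr_ge0 => //; lra.
rewrite /parabola /d natrD natrM; nra.
Qed.

End Parabola.

Lemma even_halfK n : ~~ odd n -> n = (2 * n./2)%N.
Proof. by move=> ev; rewrite -{1}(odd_double_half n) (negbTE ev) mul2n. Qed.

Lemma odd_halfK n : odd n -> n = (2 * n./2 + 1)%N.
Proof. by move=> od; rewrite -{1}(odd_double_half n) od mul2n addnC. Qed.

Section PartA.
Variables (R : realFieldType) (n : nat) (h eps : R) (omega : nat -> config n).
Hypothesis h_ge0 : 0 <= h.
Hypothesis classes : forall k, (k <= n)%N ->
  omega k \in Cset n k 0 0 /\ omega (n + k)%N \in Cset n n k k.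

Lemma a_profile k : (k <= n)%N ->
  Ham eps h (omega k) = n%:R - (n ^ 2)%:R / 2 + h * n%:R + parabola n (eps - h) k.
Proof.
by move=> le_kn; rewrite (Ham_class _ _ (classes le_kn).1) /class_energy /parabola natrX; field.
Qed.

(* Flipping the k upper + spins of C(n,k,k) gives C(n-k,0,0), gaining 4hk. *)
Lemma a_mirror k : (k <= n)%N ->
  Ham eps h (omega (n + k)%N) <= Ham eps h (omega (n - k)%N).
Proof.
move=> le_kn; have le_nk_n : (n - k <= n)%N by rewrite leq_subr.
rewrite (Ham_class _ _ (classes le_kn).2) (Ham_class _ _ (classes le_nk_n).1).
have : 0 <= h * k%:R by rewrite mulr_ge0.
rewrite /class_energy natrB //; nra.
Qed.

Lemma a_peak j : (j <= n)%N ->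
  (forall k, parabola n (eps - h) k <= parabola n (eps - h) j) ->
  maxH eps h omega (2 * n) = Ham eps h (omega j).
Proof.
move=> le_jn j_max; apply: maxH_fold => // [k|k] le_kn; first exact: a_mirror.
by rewrite !a_profile // lerD2l.
Qed.

Lemma a_even q : n = (2 * q)%N -> -1 <= eps - h -> eps - h <= 1 ->
  maxH eps h omega (2 * n) = Ham eps h (omega q) /\
  Ham eps h (omega q) = n%:R - (n ^ 2)%:R / 2 + h * n%:R.
Proof.
move=> n_eq c_ge c_le; split.
  by apply: a_peak => [|k]; [lia | rewrite n_eq; apply: parabola_even].
rewrite a_profile; last lia.
by rewrite /parabola n_eq natrM subrr; field.
Qed.

Lemma a_odd_up q : n = (2 * q + 1)%N -> 0 <= eps - h -> eps - h <= 2 ->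
  maxH eps h omega (2 * n) = Ham eps h (omega q.+1) /\
  Ham eps h (omega q.+1) = n%:R - (n ^ 2 + 1)%:R / 2 + eps + h * (n - 1)%:R.
Proof.
move=> n_eq c_ge c_le; split.
  by apply: a_peak => [|k]; [lia | rewrite n_eq; apply: parabola_odd_up].
rewrite a_profile; last lia.
by rewrite /parabola n_eq addnK -[q.+1%:R]natr1 !(natrD, natrX, natrM); field.
Qed.

Lemma a_odd_down q : n = (2 * q + 1)%N -> -2 <= eps - h -> eps - h <= 0 ->
  maxH eps h omega (2 * n) = Ham eps h (omega q) /\
  Ham eps h (omega q) = n%:R - (n ^ 2 + 1)%:R / 2 - eps + h * (n + 1)%:R.
Proof.
move=> n_eq c_ge c_le; split.
  by apply: a_peak => [|k]; [lia | rewrite n_eq; apply: parabola_odd_down].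
rewrite a_profile; last lia.
by rewrite /parabola n_eq !(natrD, natrX, natrM); field.
Qed.
End PartA.

Lemma part_a (R : realFieldType) (n : nat) (h : R) : 0 < h -> h <= 1 ->
  forall (eps : R) (omega : nat -> config n),
     0 <= eps -> eps <= 1 ->
     (forall k, (k <= n)%N ->
        omega k \in Cset n k 0 0 /\ omega (n + k)%N \in Cset n n k k) ->
     (~~ odd n ->
        maxH eps h omega (2 * n) = Ham eps h (omega n./2) /\
        Ham eps h (omega n./2) = n%:R - (n ^ 2)%:R / 2 + h * n%:R) /\
     (odd n -> h <= eps ->
        maxH eps h omega (2 * n) = Ham eps h (omega n.+1./2) /\
        Ham eps h (omega n.+1./2)
          = n%:R - (n ^ 2 + 1)%:R / 2 + eps + h * (n - 1)%:R) /\
     (odd n -> eps < h ->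
        maxH eps h omega (2 * n) = Ham eps h (omega n.-1./2) /\
        Ham eps h (omega n.-1./2)
          = n%:R - (n ^ 2 + 1)%:R / 2 - eps + h * (n + 1)%:R).
Proof.
move=> h_gt0 h_le1 eps omega eps_ge0 eps_le1 classes.
have h_ge0 : 0 <= h by apply: ltW.
split; [|split].
- by move=> /even_halfK n_eq; apply: a_even n_eq _ _ => //; lra.
- move=> /odd_halfK n_eq le_h_eps; rewrite (_ : n.+1./2 = n./2.+1); last lia.
  by apply: a_odd_up n_eq _ _ => //; lra.
- move=> /odd_halfK n_eq lt_eps_h; rewrite (_ : n.-1./2 = n./2); last lia.
  by apply: a_odd_down n_eq _ _ => //; lra.
Qed.

Section PartB.
Variables (R : realFieldType) (n : nat) (h eps : R) (omega : nat -> config n).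
Hypothesis classes : forall k, (k <= n)%N ->
  omega k \in Cset n (n - k) 0 0 /\ omega (n + k)%N \in Cset n 0 k 0.

Lemma b_profile k : (k <= n)%N ->
  Ham eps h (omega k) = n%:R - (n ^ 2)%:R / 2 + h * n%:R + parabola n (h - eps) k.
Proof.
move=> le_kn; rewrite (Ham_class _ _ (classes le_kn).1) /class_energy /parabola.
by rewrite natrB // natrX; field.
Qed.

(* Swapping the two blocks maps C(0,k,0) onto C(k,0,0) = C(n-(n-k),0,0). *)
Lemma b_mirror k : (k <= n)%N ->
  Ham eps h (omega (n + k)%N) = Ham eps h (omega (n - k)%N).
Proof.
move=> le_kn; have le_nk_n : (n - k <= n)%N by rewrite leq_subr.
rewrite (Ham_class _ _ (classes le_kn).2) (Ham_class _ _ (classes le_nk_n).1).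
by rewrite subKn // /class_energy; field.
Qed.

Lemma b_peak j : (j <= n)%N ->
  (forall k, parabola n (h - eps) k <= parabola n (h - eps) j) ->
  maxH eps h omega (2 * n) = Ham eps h (omega j).
Proof.
move=> le_jn j_max; apply: maxH_fold => // [k|k] le_kn; first by rewrite b_mirror.
by rewrite !b_profile // lerD2l.
Qed.

Lemma b_even q : n = (2 * q)%N -> -1 <= h - eps -> h - eps <= 1 ->
  maxH eps h omega (2 * n) = Ham eps h (omega q) /\
  Ham eps h (omega q) = Ham eps h (omega (n + q)%N) /\
  Ham eps h (omega q) = n%:R - (n ^ 2)%:R / 2 + h * n%:R.
Proof.
move=> n_eq c_ge c_le; split; [|split].
- by apply: b_peak => [|k]; [lia | rewrite n_eq; apply: parabola_even].
- by rewrite b_mirror; [congr (Ham _ _ (omega _)) | ]; lia.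
- rewrite b_profile; last lia.
  by rewrite /parabola n_eq natrM subrr; field.
Qed.

Lemma b_even_shift q : n = (2 * q)%N -> (0 < q)%N -> 1 <= h - eps -> h - eps <= 2 ->
  maxH eps h omega (2 * n) = Ham eps h (omega q.+1) /\
  Ham eps h (omega q.+1) = Ham eps h (omega (n + q.-1)%N) /\
  Ham eps h (omega q.+1) = n%:R - (n ^ 2)%:R / 2 - 2 * (eps + 1) + h * (n + 2)%:R.
Proof.
move=> n_eq q_gt0 c_ge c_le; split; [|split].
- by apply: b_peak => [|k]; [lia | rewrite n_eq; apply: parabola_even_shift].
- by rewrite b_mirror; [congr (Ham _ _ (omega _)) | ]; lia.
- rewrite b_profile; last lia.
  by rewrite /parabola n_eq -[q.+1%:R]natr1 !(natrD, natrX, natrM); field.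
Qed.

Lemma b_odd q : n = (2 * q + 1)%N -> 0 <= h - eps -> h - eps <= 2 ->
  maxH eps h omega (2 * n) = Ham eps h (omega q.+1) /\
  Ham eps h (omega q.+1) = Ham eps h (omega (n + q)%N) /\
  Ham eps h (omega q.+1) = n%:R - (n ^ 2 + 1)%:R / 2 - eps + h * (n + 1)%:R.
Proof.
move=> n_eq c_ge c_le; split; [|split].
- by apply: b_peak => [|k]; [lia | rewrite n_eq; apply: parabola_odd_up].
- by rewrite b_mirror; [congr (Ham _ _ (omega _)) | ]; lia.
- rewrite b_profile; last lia.
  by rewrite /parabola n_eq -[q.+1%:R]natr1 !(natrD, natrX, natrM); field.
Qed.
End PartB.

Lemma part_b (R : realFieldType) (n : nat) (h : R) : (2 <= n)%N -> 0 < h -> h <= 1 ->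
  forall (eps : R) (omega : nat -> config n),
     h < - eps -> - eps <= 1 ->
     (forall k, (k <= n)%N ->
        omega k \in Cset n (n - k) 0 0 /\ omega (n + k)%N \in Cset n 0 k 0) ->
     (~~ odd n -> h - eps < 1 ->
        maxH eps h omega (2 * n) = Ham eps h (omega n./2) /\
        Ham eps h (omega n./2) = Ham eps h (omega (n + n./2)%N) /\
        Ham eps h (omega n./2) = n%:R - (n ^ 2)%:R / 2 + h * n%:R) /\
     (~~ odd n -> 1 <= h - eps -> h - eps < 2 ->
        maxH eps h omega (2 * n) = Ham eps h (omega n.+2./2) /\
        Ham eps h (omega n.+2./2) = Ham eps h (omega (n + (n - 2)./2)%N) /\
        Ham eps h (omega n.+2./2)
          = n%:R - (n ^ 2)%:R / 2 - 2 * (eps + 1) + h * (n + 2)%:R) /\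
     (odd n ->
        maxH eps h omega (2 * n) = Ham eps h (omega n.+1./2) /\
        Ham eps h (omega n.+1./2) = Ham eps h (omega (n + n.-1./2)%N) /\
        Ham eps h (omega n.+1./2)
          = n%:R - (n ^ 2 + 1)%:R / 2 - eps + h * (n + 1)%:R).
Proof.
move=> n_ge2 h_gt0 h_le1 eps omega h_lt_eps eps_ge classes.
split; [|split].
- by move=> /even_halfK n_eq c_lt; apply: b_even n_eq _ _ => //; lra.
- move=> /even_halfK n_eq c_ge c_lt.
  rewrite (_ : n.+2./2 = n./2.+1); last lia.
  rewrite (_ : (n - 2)./2 = n./2.-1); last lia.
  by apply: b_even_shift n_eq _ _ _ => //; [lia | lra].
- move=> /odd_halfK n_eq; rewrite (_ : n.+1./2 = n./2.+1); last lia.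
  rewrite (_ : n.-1./2 = n./2); last lia.
  by apply: b_odd n_eq _ _ => //; lra.
Qed.

Section PartC.
Variables (R : realFieldType) (n : nat) (h eps : R) (omega : nat -> config n).
Hypothesis classes : forall k, (k <= n)%N -> omega k \in Cset n n k k.

Lemma c_profile k : (k <= n)%N ->
  Ham eps h (omega k) = n%:R - (n ^ 2)%:R / 2 - h * n%:R + parabola n (- (eps + h)) k.
Proof.
by move=> le_kn; rewrite (Ham_class _ _ (classes le_kn)) /class_energy /parabola natrX; field.
Qed.

Lemma c_peak j : (j <= n)%N ->
  (forall k, parabola n (- (eps + h)) k <= parabola n (- (eps + h)) j) ->
  maxH eps h omega n = Ham eps h (omega j).
Proof.
move=> le_jn j_max; apply: maxH_argmax => // k le_kn.
by rewrite !c_profile // lerD2l.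
Qed.

Lemma c_even q : n = (2 * q)%N -> -1 <= - (eps + h) -> - (eps + h) <= 1 ->
  maxH eps h omega n = Ham eps h (omega q) /\
  Ham eps h (omega q) = n%:R - (n ^ 2)%:R / 2 - h * n%:R.
Proof.
move=> n_eq c_ge c_le; split.
  by apply: c_peak => [|k]; [lia | rewrite n_eq; apply: parabola_even].
rewrite c_profile; last lia.
by rewrite /parabola n_eq natrM subrr; field.
Qed.

Lemma c_odd q : n = (2 * q + 1)%N -> -2 <= - (eps + h) -> - (eps + h) <= 0 ->
  maxH eps h omega n = Ham eps h (omega q) /\
  Ham eps h (omega q) = n%:R - (n ^ 2 + 1)%:R / 2 + eps - h * (n - 1)%:R.
Proof.
move=> n_eq c_ge c_le; split.
  by apply: c_peak => [|k]; [lia | rewrite n_eq; apply: parabola_odd_down].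
rewrite c_profile; last lia.
by rewrite /parabola n_eq addnK !(natrD, natrX, natrM); field.
Qed.
End PartC.

Lemma part_c (R : realFieldType) (n : nat) (h : R) : h <= 1 ->
  forall (eps : R) (omega : nat -> config n),
     0 < - eps -> - eps < h ->
     (forall k, (k <= n)%N -> omega k \in Cset n n k k) ->
     (~~ odd n ->
        maxH eps h omega n = Ham eps h (omega n./2) /\
        Ham eps h (omega n./2) = n%:R - (n ^ 2)%:R / 2 - h * n%:R) /\
     (odd n ->
        maxH eps h omega n = Ham eps h (omega n.-1./2) /\
        Ham eps h (omega n.-1./2)
          = n%:R - (n ^ 2 + 1)%:R / 2 + eps - h * (n - 1)%:R).
Proof.
move=> h_le1 eps omega eps_lt0 eps_gt classes; split.
- by move=> /even_halfK n_eq; apply: c_even n_eq _ _ => //; lra.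
- move=> /odd_halfK n_eq; rewrite (_ : n.-1./2 = n./2); last lia.
  by apply: c_odd n_eq _ _ => //; lra.
Qed.

Theorem lemma5p2 (R : realFieldType) (n : nat) (h : R) :
  (2 <= n)%N -> 0 < h -> h <= 1 ->
  (* (a) *)
  (forall (eps : R) (omega : nat -> config n),
     0 <= eps -> eps <= 1 ->
     (forall k, (k <= n)%N ->
        omega k \in Cset n k 0 0 /\ omega (n + k)%N \in Cset n n k k) ->
     (~~ odd n ->
        maxH eps h omega (2 * n) = Ham eps h (omega n./2) /\
        Ham eps h (omega n./2) = n%:R - (n ^ 2)%:R / 2 + h * n%:R) /\
     (odd n -> h <= eps ->
        maxH eps h omega (2 * n) = Ham eps h (omega n.+1./2) /\
        Ham eps h (omega n.+1./2)
          = n%:R - (n ^ 2 + 1)%:R / 2 + eps + h * (n - 1)%:R) /\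
     (odd n -> eps < h ->
        maxH eps h omega (2 * n) = Ham eps h (omega n.-1./2) /\
        Ham eps h (omega n.-1./2)
          = n%:R - (n ^ 2 + 1)%:R / 2 - eps + h * (n + 1)%:R)) /\
  (* (b) *)
  (forall (eps : R) (omega : nat -> config n),
     h < - eps -> - eps <= 1 ->
     (forall k, (k <= n)%N ->
        omega k \in Cset n (n - k) 0 0 /\ omega (n + k)%N \in Cset n 0 k 0) ->
     (~~ odd n -> h - eps < 1 ->
        maxH eps h omega (2 * n) = Ham eps h (omega n./2) /\
        Ham eps h (omega n./2) = Ham eps h (omega (n + n./2)%N) /\
        Ham eps h (omega n./2) = n%:R - (n ^ 2)%:R / 2 + h * n%:R) /\
     (~~ odd n -> 1 <= h - eps -> h - eps < 2 ->
        maxH eps h omega (2 * n) = Ham eps h (omega n.+2./2) /\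
        Ham eps h (omega n.+2./2) = Ham eps h (omega (n + (n - 2)./2)%N) /\
        Ham eps h (omega n.+2./2)
          = n%:R - (n ^ 2)%:R / 2 - 2 * (eps + 1) + h * (n + 2)%:R) /\
     (odd n ->
        maxH eps h omega (2 * n) = Ham eps h (omega n.+1./2) /\
        Ham eps h (omega n.+1./2) = Ham eps h (omega (n + n.-1./2)%N) /\
        Ham eps h (omega n.+1./2)
          = n%:R - (n ^ 2 + 1)%:R / 2 - eps + h * (n + 1)%:R)) /\
  (* (c) *)
  (forall (eps : R) (omega : nat -> config n),
     0 < - eps -> - eps < h ->
     (forall k, (k <= n)%N -> omega k \in Cset n n k k) ->
     (~~ odd n ->
        maxH eps h omega n = Ham eps h (omega n./2) /\
        Ham eps h (omega n./2) = n%:R - (n ^ 2)%:R / 2 - h * n%:R) /\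
     (odd n ->
        maxH eps h omega n = Ham eps h (omega n.-1./2) /\
        Ham eps h (omega n.-1./2)
          = n%:R - (n ^ 2 + 1)%:R / 2 + eps - h * (n - 1)%:R)).
Proof.
move=> n_ge2 h_gt0 h_le1; split; first exact: part_a.
by split; [exact: part_b | exact: part_c].
Qed.
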